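(* Let $k\geq 3$ be an integer, let $D$ be a digraph containing no subdivision of $B(k,1;1)$, let $\mathcal{C}$ be a nice collection of directed cycles of $D$ (with respect to $k$), and let $\mathcal{S}$ be a component of $\mathcal{C}$. Then the subdigraph of $D$ induced by $V(\bigcup\mathcal{S})$ has chromatic number at most $2k-2$.
   Context: Chromatic number of a digraph means that of its underlying undirected graph. For a positive integer $k$, a collection $\mathcal{C}$ of directed cycles of a digraph $D$ is nice if every cycle of $\mathcal{C}$ has length at least $2k-2$ and any two distinct cycles of $\mathcal{C}$ share at most one vertex. The components of $\mathcal{C}$ are the sets of cycles corresponding to connected components of the graph with vertex set $\mathcal{C}$ in which two cycles are adjacent iff they share a vertex. $V(\bigcup\mathcal{S})$ is the union of the vertex sets of the cycles in $\mathcal{S}$. A digraph contains a subdivision of $B(k_1,k_2;k_3)$ if there exist distinct vertices $u,v$ and three pairwise internally vertex-disjoint directed paths: two from $u$ to $v$ of lengths at least $k_1$ and $k_2$, and one from $v$ to $u$ of length at least $k_3$. *)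

From mathcomp Require Import all_boot.
Set Implicit Arguments. Unset Strict Implicit. Unset Printing Implicit Defensive.

(* A digraph on a finite vertex type T is an arc relation D : rel T
   (D x y means there is an arc x -> y); digraphs are loopless
   (irreflexive D), multiple arcs are irrelevant for these notions. *)

Section Digraphs.
Variables (T : finType) (D : rel T).

(* A directed cycle is given by the cyclic sequence of its (distinct)
   vertices [:: v0; ...; v_(l-1)], with arcs v_i -> v_(i+1) and
   v_(l-1) -> v0; its length is l = size c >= 2. *)
Definition dcycle (c : seq T) : bool :=
  [&& 2 <= size c, uniq c & cycle D c].

(* A directed path from u to v with interior vertex sequence q:
   u :: q ++ [:: v] is a directed path with distinct vertices;
   its length is size q + 1. *)
Definition dpath (u v : T) (q : seq T) : bool :=
  path D u (rcons q v) && uniq (u :: rcons q v).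

Definition disjoint_seq (p q : seq T) : bool := all (fun x => x \notin q) p.

Definition has_subdiv_B (k1 k2 k3 : nat) : Prop :=
  exists (u v : T) (q1 q2 q3 : seq T),
    [/\ u != v,
        dpath u v q1 /\ k1 <= (size q1).+1,
        dpath u v q2 /\ k2 <= (size q2).+1,
        dpath v u q3 /\ k3 <= (size q3).+1
      & [/\ q1 != q2 ,
             disjoint_seq q1 q2, disjoint_seq q1 q3 & disjoint_seq q2 q3]].

Definition nice_collection (k : nat) (I : finType) (C : I -> seq T) : Prop :=
  (forall i, dcycle (C i) /\ 2 * k - 2 <= size (C i)) /\
  (forall i j, i != j -> #|[pred x | (x \in C i) && (x \in C j)]| <= 1).

End Digraphs.

Definition share_vertex (T : finType) (I : finType) (C : I -> seq T) : rel I :=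
  fun i j => has (fun x => x \in C j) (C i).

(* S is a component of the collection: the vertex set of a connected
   component of the intersection graph. *)
Definition is_component (T I : finType) (C : I -> seq T) (S : {set I}) : Prop :=
  exists i, S = [set j | connect (share_vertex C) i j].

Definition union_vertices (T I : finType) (C : I -> seq T) (S : {set I}) : {set T} :=
  [set x | [exists i in S, x \in C i]].

(* The subdigraph of D induced by X has chromatic number at most m:
   a proper m-colouring of its underlying undirected graph exists. *)
Definition induced_colorable (T : finType) (D : rel T) (X : {set T}) (m : nat) : Prop :=
  exists f : T -> 'I_m,
    forall x y, x \in X -> y \in X -> D x y -> f x != f y.

(* A chord x -> y of a directed cycle, the arc of the cycle from x to y and
   the rest of the cycle form a B(k,1;1) unless that arc has length < k. So in
   a cycle of length at least 2k-2 adjacent vertices are cyclically close, and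
   a greedy colouring along the cycle, started just after a missing chord
   v_t -> v_(t+2) (one exists if the cycle is longer than 2k-2, otherwise the
   odd and even vertices give a B(k,1;1)), uses at most 2k-2 colours.

   A component is built by attaching its cycles one at a time along shared
   vertices.  As long as the union X built so far is strongly connected in a
   suitably strong sense ([routable]), a new cycle C through w in X meets X
   only in w and no arc joins C - w to X - w: otherwise a path through X
   between C and a cycle of X through w, together with the long arcs of these
   two cycles, yields a B(k,1;1).  Hence colourings of X and of C glue after
   permuting the colours of C. *)

From mathcomp Require Import all_boot zify perm.
Set Implicit Arguments. Unset Strict Implicit. Unset Printing Implicit Defensive.

Section DisjointSeq.
Variable T : finType.
Implicit Types (x : T) (s t : seq T).

Lemma disjoint_seq_nill t : disjoint_seq [::] t. Proof. by []. Qed.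

Lemma disjoint_seq_nilr s : disjoint_seq s [::]. Proof. by elim: s. Qed.

Lemma disjoint_seq_consl x s t :
  disjoint_seq (x :: s) t = (x \notin t) && disjoint_seq s t.
Proof. by []. Qed.

Lemma disjoint_seq_catl s1 s2 t :
  disjoint_seq (s1 ++ s2) t = disjoint_seq s1 t && disjoint_seq s2 t.
Proof. exact: all_cat. Qed.

Lemma disjoint_seq_consr x s t :
  disjoint_seq s (x :: t) = (x \notin s) && disjoint_seq s t.
Proof.
by elim: s => //= y s ->; rewrite !inE !negb_or eq_sym andbACA.
Qed.

Lemma disjoint_seq_catr s t1 t2 :
  disjoint_seq s (t1 ++ t2) = disjoint_seq s t1 && disjoint_seq s t2.
Proof.
by elim: s => //= y s ->; rewrite mem_cat negb_or andbACA.
Qed.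

Lemma disjoint_seq_sym s t : disjoint_seq s t = disjoint_seq t s.
Proof.
elim: s => [|x s IH]; first by rewrite disjoint_seq_nilr.
by rewrite disjoint_seq_consl disjoint_seq_consr IH.
Qed.

Lemma cat_uniq_disjoint s t : uniq (s ++ t) = [&& uniq s, uniq t & disjoint_seq s t].
Proof.
rewrite cat_uniq has_sym -all_predC /disjoint_seq.
by case: (uniq s); case: (uniq t); case: (all _ _).
Qed.

Lemma disjoint_seq_self s : disjoint_seq s s = nilp s.
Proof. by case: s => //= x s; rewrite inE eqxx. Qed.

Definition disjoint_seqE :=
  (disjoint_seq_nill, disjoint_seq_nilr, disjoint_seq_consl, disjoint_seq_catl,
   disjoint_seq_consr, disjoint_seq_catr, cat_uniq_disjoint, cons_uniq, andbT, andTb).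

End DisjointSeq.

Ltac split_andb_hyps := repeat match goal with H : is_true (_ && _) |- _ =>
  let a := fresh "h" in let b := fresh "h" in case/andP: H => a b end.
Ltac expand_uniq := rewrite ?disjoint_seqE; do 3 rewrite ?mem_cat ?inE ?negb_or.
Ltac close_andb_goal := repeat (apply/andP; split); try assumption;
  try (rewrite disjoint_seq_sym; assumption); try (rewrite eq_sym; assumption).

Section CycleSplit.
Variables (T : finType) (D : rel T).

Lemma cycle_cat_path x y p1 p2 : cycle D (x :: p1 ++ y :: p2) ->
  path D x (rcons p1 y) /\ path D y (rcons p2 x).
Proof.
rewrite /= rcons_cat cat_path /= rcons_path.
by rewrite rcons_path; case/and4P=> -> -> -> ->.
Qed.

Lemma path_rcons_cat a b c s t : path D a (rcons s b) -> path D b (rcons t c) ->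
  path D a (rcons (s ++ b :: t) c).
Proof. by rewrite rcons_cat cat_path rcons_path /= => /andP[-> ->] ->. Qed.

Lemma cycle_rot_to c a b : cycle D c -> uniq c -> a \in c -> b \in c -> a != b ->
  exists p1 p2, [/\ cycle D (a :: p1 ++ b :: p2), uniq (a :: p1 ++ b :: p2),
     a :: p1 ++ b :: p2 =i c & size c = size p1 + size p2 + 2].
Proof.
move=> cc uc ac bc ab; case/rot_to: ac => i s E.
have : b \in a :: s by rewrite -E mem_rot.
rewrite inE eq_sym (negbTE ab) orFb => /splitPr sp.
case: sp E => p1 p2 E.
exists p1, p2; rewrite -E rot_cycle rot_uniq; split => //.
- by move=> z; rewrite mem_rot.
- by rewrite -(size_rot i) E /= size_cat /=; lia.
Qed.

End CycleSplit.

Section SubdivisionB.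
Variables (T : finType) (D : rel T) (k : nat).
Hypothesis k_gt1 : 1 < k.

Lemma subdiv_B_of_paths u v q1 q2 q3 :
  path D u (rcons q1 v) -> path D u (rcons q2 v) -> path D v (rcons q3 u) ->
  uniq (u :: v :: q1 ++ q2 ++ q3) -> k <= (size q1).+1 -> has_subdiv_B D k 1 1.
Proof.
move=> p1 p2 p3 U hk; move: U; expand_uniq => U; split_andb_hyps.
exists u, v, q1, q2, q3; split => //.
- by split => //; rewrite /dpath p1 -cats1 /=; expand_uniq; close_andb_goal.
- by split => //; rewrite /dpath p2 -cats1 /=; expand_uniq; close_andb_goal.
- by split => //; rewrite /dpath p3 -cats1 /=; expand_uniq; close_andb_goal.
split => //; have d12 : disjoint_seq q1 q2 by close_andb_goal.
by apply: contraTneq d12 => <-; rewrite disjoint_seq_self /nilp -lt0n -ltnS (leq_trans k_gt1 hk).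
Qed.

Hypothesis noB : ~ has_subdiv_B D k 1 1.

Lemma dcycle_chord_short x y p1 p2 :
  cycle D (x :: p1 ++ y :: p2) -> uniq (x :: p1 ++ y :: p2) -> D x y -> size p1 + 2 <= k.
Proof.
move=> cc uc dxy; rewrite leqNgt; apply/negP => hk; apply: noB.
have [P1 P2] := cycle_cat_path cc.
apply: (@subdiv_B_of_paths x y p1 [::] p2) => //=; first by rewrite dxy.
  by move: uc; expand_uniq => uc; split_andb_hyps; expand_uniq; close_andb_goal.
by move: hk; clear; lia.
Qed.

(* Two cycles through p, otherwise disjoint, the first of length at least
   2k-2, and a path r from the second cycle into the first one: one of the two
   arcs of the first cycle from p to q, or from q back to p, has length at
   least k and closes a B(k,1;1) together with the second cycle and r. *)
Lemma bridge_into_cycle_subdiv_B p q x s1 s2 t1 t2 r :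
  cycle D (p :: s1 ++ q :: s2) -> uniq (p :: s1 ++ q :: s2) ->
  2 * k - 2 <= size s1 + size s2 + 2 ->
  cycle D (p :: t1 ++ x :: t2) -> uniq (p :: t1 ++ x :: t2) ->
  disjoint_seq (t1 ++ x :: t2) (p :: s1 ++ q :: s2) ->
  path D x (rcons r q) -> uniq r ->
  disjoint_seq r (p :: s1 ++ q :: s2) -> disjoint_seq r (p :: t1 ++ x :: t2) ->
  False.
Proof.
move=> cc uc hl cc' uc' d1 R ur d2 d3; apply: noB.
have [P1 P2] := cycle_cat_path cc; have [P1' P2'] := cycle_cat_path cc'.
move: uc uc' d1 d2 d3; expand_uniq => uc uc' d1 d2 d3; split_andb_hyps.
case: (leqP k (size s1).+1) => hk.
  apply: (@subdiv_B_of_paths p q s1 (t1 ++ x :: r) s2) => //.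
    exact: path_rcons_cat.
  by expand_uniq; close_andb_goal.
apply: (@subdiv_B_of_paths x p (r ++ q :: s2) t2 t1) => //.
- exact: path_rcons_cat.
- by expand_uniq; close_andb_goal.
- by rewrite size_cat /=; move: hk hl k_gt1; clear; lia.
Qed.

Lemma bridge_from_cycle_subdiv_B p q x s1 s2 t1 t2 r :
  cycle D (p :: s1 ++ q :: s2) -> uniq (p :: s1 ++ q :: s2) ->
  2 * k - 2 <= size s1 + size s2 + 2 ->
  cycle D (p :: t1 ++ x :: t2) -> uniq (p :: t1 ++ x :: t2) ->
  disjoint_seq (t1 ++ x :: t2) (p :: s1 ++ q :: s2) ->
  path D q (rcons r x) -> uniq r ->
  disjoint_seq r (p :: s1 ++ q :: s2) -> disjoint_seq r (p :: t1 ++ x :: t2) ->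
  False.
Proof.
move=> cc uc hl cc' uc' d1 R ur d2 d3; apply: noB.
have [P1 P2] := cycle_cat_path cc; have [P1' P2'] := cycle_cat_path cc'.
move: uc uc' d1 d2 d3; expand_uniq => uc uc' d1 d2 d3; split_andb_hyps.
case: (leqP k (size s2).+1) => hk.
  apply: (@subdiv_B_of_paths q p s2 (r ++ x :: t2) s1) => //.
    exact: path_rcons_cat.
  by expand_uniq; close_andb_goal.
apply: (@subdiv_B_of_paths p x (s1 ++ q :: r) t1 t2) => //.
- exact: path_rcons_cat.
- by expand_uniq; close_andb_goal.
- by rewrite size_cat /=; move: hk hl k_gt1; clear; lia.
Qed.

End SubdivisionB.

Lemma greedy_coloring (m l : nat) (adj : rel nat) : 0 < m ->
  (forall i, i < l -> size [seq j <- iota 0 i | adj i j || adj j i] < m) ->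
  exists g : nat -> 'I_m,
    forall i j, i < l -> j < l -> i != j -> adj i j -> g i != g j.
Proof.
move=> m_gt0 deg_lt.
suff: forall n, n <= l -> exists g : nat -> 'I_m,
    forall i j, i < n -> j < n -> i != j -> adj i j -> g i != g j.
  by move/(_ l (leqnn l)).
elim=> [_|n IH lt_nl]; first by exists (fun _ => Ordinal m_gt0).
have [g Hg] := IH (ltnW lt_nl).
set E := [seq j <- iota 0 n | adj n j || adj j n].
have [c Hc] : exists c : 'I_m, c \notin map g E.
  case: (pickP (fun c : 'I_m => c \notin map g E)) => [c Hc | H]; first by exists c.
  have sub : {subset enum 'I_m <= map g E} by move=> c _; move: (H c) => /negbFE.
  have := uniq_leq_size (enum_uniq 'I_m) sub.
  by rewrite size_enum_ord size_map; have := deg_lt n lt_nl; rewrite -/E; lia.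
have gE t : t < n -> adj n t || adj t n -> g t \in map g E.
  by move=> lt_tn a_nt; apply: map_f; rewrite mem_filter mem_iota a_nt.
exists (fun i => if i == n then c else g i) => i j.
rewrite !ltnS [i <= n]leq_eqVlt [j <= n]leq_eqVlt.
case: (eqVneq i n) => [->|_] /= lt_in; case: (eqVneq j n) => [->|_] /= lt_jn //.
- by move=> _ a_nj; apply: contraNneq Hc => ->; rewrite gE ?a_nj.
- by move=> _ a_in; apply: contraNneq Hc => <-; rewrite gE ?a_in ?orbT.
- exact: Hg.
Qed.

Lemma nth_rot (T : Type) (x0 : T) (s : seq T) n i : n <= size s -> i < size s ->
  nth x0 (rot n s) i = nth x0 s ((n + i) %% size s).
Proof.
move=> hn hi; rewrite /rot nth_cat size_drop.
case: ltnP => h; first by rewrite nth_drop modn_small //; lia.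
have -> : n + i = n + i - size s + size s by lia.
by rewrite modnDr modn_small ?nth_take; [congr nth | |]; lia.
Qed.

Fixpoint iota2 (m n : nat) : seq nat := if n is n'.+1 then m :: iota2 m.+2 n' else [::].

Lemma size_iota2 m n : size (iota2 m n) = n.
Proof. by elim: n m => //= n IH m; rewrite IH. Qed.

Lemma mem_iota2 m n x : (x \in iota2 m n) = (m <= x < m + 2 * n) && (odd x == odd m).
Proof.
elim: n m => [|n IH] m /=; first by rewrite addn0 ltnNge andbN.
rewrite inE IH /= negbK.
have [->|ne_xm] := eqVneq x m; first by rewrite !eqxx andbT; lia.
have [->|ne_xm1] := eqVneq x m.+1; first by rewrite /= ltnn; case: (odd m); rewrite ?andbF.
by case: (odd x == odd m); rewrite ?andbT ?andbF //; lia.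
Qed.

Lemma iota2_uniq m n : uniq (iota2 m n).
Proof. by elim: n m => //= n IH m; rewrite IH mem_iota2 andbT; lia. Qed.

Lemma path_iota2 (R : rel nat) x y m n :
  (forall a b, a < b <= a.+2 -> b <= y -> R a b) -> 0 < n ->
  x < m <= x.+2 -> y <= m + 2 * n <= y.+1 -> path R x (rcons (iota2 m n) y).
Proof.
move=> hR; elim: n x m => // n IH x m _ hxm hmy /=.
rewrite hR //; last by lia.
case: n IH hmy => [|n] IH hmy /=; first by rewrite hR //; lia.
by apply: IH => //; lia.
Qed.

Section CycleColoring.
Variables (T : finType) (D : rel T).

Lemma cycle_nth_arc c x0 i : cycle D c -> i.+1 < size c ->
  D (nth x0 c i) (nth x0 c i.+1).
Proof.
case: c => [|x s] //= /(pathP x0) H; rewrite ltnS => hi.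
have := H i; rewrite size_rcons => /(_ (ltnW hi)).
by rewrite -rcons_cons !nth_rcons /= hi ltnS (ltnW hi).
Qed.

Lemma cycle_last_arc c x0 : cycle D c -> 0 < size c ->
  D (nth x0 c (size c).-1) (nth x0 c 0).
Proof.
case: c => [|x s] //= /(pathP x0) H _.
have := H (size s); rewrite size_rcons => /(_ (ltnSn _)).
by rewrite -rcons_cons !nth_rcons /= ltnSn ltnn eqxx.
Qed.

Lemma split_nth2 (c : seq T) x0 j i : j < i < size c ->
  c = take j c ++ nth x0 c j :: take (i - j.+1) (drop j.+1 c) ++ nth x0 c i :: drop i.+1 c.
Proof.
case/andP=> lt_ji lt_ic.
rewrite -{1}(cat_take_drop j c) (drop_nth x0); last by lia.
congr (_ ++ _ :: _).
rewrite -{1}(cat_take_drop (i - j.+1) (drop j.+1 c)) drop_drop.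
have -> : i - j.+1 + j.+1 = i by lia.
by rewrite [drop i c](drop_nth x0).
Qed.

Variable k : nat.
Hypothesis k_gt2 : 2 < k.
Hypothesis noB : ~ has_subdiv_B D k 1 1.

Lemma dcycle_chord_span c x0 j i : cycle D c -> uniq c -> j < i < size c ->
  (D (nth x0 c j) (nth x0 c i) -> i < j + k) /\
  (D (nth x0 c i) (nth x0 c j) -> size c + j < i + k).
Proof.
move=> cc uc lt_jic; have k_gt1 : 1 < k by lia.
move: (split_nth2 x0 lt_jic) cc uc.
set s1 := take j c; set s2 := take _ _; set s3 := drop i.+1 c.
set cj := nth x0 c j; set ci := nth x0 c i => Ec cc uc.
have [sz1 sz2 sz3] : [/\ size s1 = j, size s2 = i - j.+1 & size s3 = size c - i.+1].
  by rewrite size_takel ?size_takel ?size_drop //; lia.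
have E1 : rot (size s1) c = cj :: s2 ++ ci :: (s3 ++ s1).
  by rewrite {1}Ec rot_size_cat /= -catA.
have E2 : rot (size (s1 ++ cj :: s2)) c = ci :: (s3 ++ s1) ++ cj :: s2.
  by rewrite {1}Ec -cat_cons catA rot_size_cat /= catA.
split=> arc.
- have := @dcycle_chord_short _ D k k_gt1 noB cj ci s2 (s3 ++ s1).
  by rewrite -E1 rot_cycle rot_uniq => /(_ cc uc arc); lia.
- have := @dcycle_chord_short _ D k k_gt1 noB ci cj (s3 ++ s1) s2.
  by rewrite -E2 rot_cycle rot_uniq size_cat => /(_ cc uc arc); lia.
Qed.

(* If every chord v_t -> v_(t+2) is present, the odd-indexed and the
   even-indexed vertices give two long internally disjoint paths from v_0 to
   v_(l-1), closed by the arc v_(l-1) -> v_0. *)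
Lemma two_chords_subdiv_B c x0 : cycle D c -> uniq c -> 2 * k - 1 <= size c ->
  (forall t, t.+2 < size c -> D (nth x0 c t) (nth x0 c t.+2)) ->
  has_subdiv_B D k 1 1.
Proof.
move=> cc uc hl chord2; set l := size c in hl chord2.
pose v i := nth x0 c i.
have short_arc a b : a < b <= a.+2 -> b <= l.-1 -> D (v a) (v b).
  move=> hab hb; have [eb|ne] := eqVneq b a.+2; first by rewrite eb; apply: chord2; lia.
  have -> : b = a.+1 by lia.
  by apply: cycle_nth_arc => //; lia.
have path_v m n : 0 < n -> 0 < m <= 2 -> l.-1 <= m + 2 * n <= l ->
    path D (v 0) (rcons (map v (iota2 m n)) (v l.-1)).
  move=> n_gt0 hm hmn; rewrite -map_rcons path_map.
  by apply: path_iota2 => //; lia.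
have uniq_v s : uniq s -> all (gtn l) s -> uniq (map v s).
  move=> us /allP sl; rewrite map_inj_in_uniq // => a b /sl la /sl lb.
  by move/eqP; rewrite nth_uniq // => /eqP.
set n1 := (l - 1) %/ 2; set n2 := (l - 2) %/ 2.
apply: (@subdiv_B_of_paths _ D k _ (v 0) (v l.-1)
          (map v (iota2 1 n1)) (map v (iota2 2 n2)) [::]); first by lia.
- by apply: path_v; lia.
- by apply: path_v; lia.
- by rewrite /= andbT; apply: cycle_last_arc => //; lia.
- rewrite cats0 -map_cat -!map_cons; apply: uniq_v; last first.
    by apply/allP=> z; rewrite !inE mem_cat !mem_iota2; lia.
  rewrite /= cat_uniq !inE !mem_cat !mem_iota2 !iota2_uniq /= andbT.
  apply/and3P; split; try lia.
  by apply/hasPn => z; rewrite !mem_iota2 => /andP[_ /eqP ->]; rewrite andbF.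
- by rewrite size_map size_iota2; lia.
Qed.

(* The rotation makes [v_(l-1) -> v_1] a non-arc: then, in the greedy
   colouring along the cycle, the last vertex also sees at most 2k-3
   coloured neighbours. *)
Lemma dcycle_good_rotation c x0 : cycle D c -> uniq c -> 2 * k - 2 <= size c ->
  exists c', [/\ cycle D c', uniq c', c' =i c, size c' = size c &
    size c = 2 * k - 2 \/ ~~ D (nth x0 c' (size c).-1) (nth x0 c' 1)].
Proof.
move=> cc uc hl; set l := size c in hl *.
have [el|nel] := eqVneq l (2 * k - 2); first by exists c; split => //; left.
have [/hasP[t]|/hasPn no_gap] :=
  boolP (has (fun t => ~~ D (nth x0 c t) (nth x0 c t.+2)) (iota 0 (l - 2))).
  rewrite mem_iota => /andP[_ ht] gap.
  exists (rot t.+1 c); rewrite rot_cycle rot_uniq size_rot; split => //.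
    exact: mem_rot.
  have e1 : (t.+1 + l.-1) %% l = t.
    by rewrite (_ : t.+1 + l.-1 = t + l) ?modnDr ?modn_small //; lia.
  have e2 : (t.+1 + 1) %% l = t.+2 by rewrite modn_small //; lia.
  by right; rewrite !nth_rot -/l ?e1 ?e2 //; lia.
exfalso; apply/noB/(two_chords_subdiv_B (x0 := x0) cc uc); first by lia.
by move=> t ht; have := no_gap t; rewrite mem_iota negbK; apply; lia.
Qed.

Lemma dcycle_earlier_neighbours c x0 i : cycle D c -> uniq c ->
  2 * k - 2 <= size c ->
  size c = 2 * k - 2 \/ ~~ D (nth x0 c (size c).-1) (nth x0 c 1) -> i < size c ->
  size [seq j <- iota 0 i | D (nth x0 c i) (nth x0 c j) || D (nth x0 c j) (nth x0 c i)]
    < 2 * k - 2.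
Proof.
move=> cc uc hl good hi; set l := size c in hl good hi.
(* An earlier neighbour j of i lies less than k positions before i (chord
   j -> i) or, around the cycle, less than k positions after i (chord
   i -> j); L lists these positions, without 1 when i is the last vertex. *)
pose L := if i < l.-1 then iota (i - (k - 1)) (k - 1) ++ iota 0 (k - 2)
          else if l == 2 * k - 2 then iota 0 (2 * k - 3)
          else iota (l - k) (k - 1) ++ 0 :: iota 2 (k - 3).
have sizeL : size L = 2 * k - 3.
  by rewrite /L; case: ifP => _; [|case: ifP => _]; rewrite ?size_cat /= !size_iota; lia.
suff: size [seq j <- iota 0 i | D (nth x0 c i) (nth x0 c j) || D (nth x0 c j) (nth x0 c i)]
        <= size L by rewrite sizeL; lia.
apply: uniq_leq_size; first by rewrite filter_uniq // iota_uniq.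
move=> j; rewrite mem_filter mem_iota add0n => /andP[arc /andP[_ lt_ji]].
have [fwd bwd] := dcycle_chord_span x0 cc uc (introT andP (conj lt_ji hi)).
have span : i < j + k \/ l + j < i + k.
  by case/orP: arc => a; [right; apply: bwd | left; apply: fwd].
rewrite /L; case: ifP => [lt_il|ge_il]; first by rewrite mem_cat !mem_iota; lia.
case: ifP => [el|nel]; first by rewrite mem_iota; lia.
rewrite mem_cat inE !mem_iota.
have [ej1|nj1] := eqVneq j 1; last by lia.
have ei : i = l.-1 by lia.
case/orP: arc => arc; last by have := fwd arc; lia.
by case: good => [el|ngap]; [rewrite el eqxx in nel | move: ngap; rewrite -ej1 -ei arc].
Qed.

Lemma dcycle_colorable c : irreflexive D -> cycle D c -> uniq c ->
  2 * k - 2 <= size c -> induced_colorable D [set x in c] (2 * k - 2).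
Proof.
case: c => [|x0 s] irrD cc uc hl; first by move: hl k_gt2; clear; rewrite /=; lia.
set c := x0 :: s in cc uc hl *.
have [c' [cc' uc' mem_c' size_c' good]] := dcycle_good_rotation x0 cc uc hl.
rewrite -size_c' in hl good.
pose adj i j := D (nth x0 c' i) (nth x0 c' j).
have [g Hg] : exists g : nat -> 'I_(2 * k - 2), forall i j, i < size c' -> j < size c' ->
    i != j -> adj i j -> g i != g j.
  by apply: greedy_coloring => [|i]; [lia | exact: dcycle_earlier_neighbours].
exists (fun x => g (index x c')) => x y; rewrite !in_set -!mem_c' => xc yc dxy.
apply: Hg; rewrite ?index_mem //; last by rewrite /adj !nth_index.
apply: contraTneq dxy => /(congr1 (nth x0 c')); rewrite !nth_index // => ->.
by rewrite irrD.
Qed.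

End CycleColoring.

Section InducedConnect.
Variables (T : finType) (D : rel T).

Definition induced_rel (A : {set T}) : rel T := fun a b => [&& D a b, a \in A & b \in A].

Definition strongly_connected_in (A : {set T}) : Prop :=
  {in A &, forall y z, connect (induced_rel A) y z}.

Lemma path_induced_rel (A : {set T}) x p : x \in A -> all [in A] p ->
  path D x p -> path (induced_rel A) x p.
Proof.
elim: p x => //= y p IH x xA /andP[yA pA] /andP[dxy hp].
by rewrite /induced_rel dxy xA yA IH.
Qed.

Lemma induced_rel_path_in (A : {set T}) x p : path (induced_rel A) x p -> all [in A] p.
Proof. by elim: p x => //= y p IH x /andP[/and3P[_ _ ->] /IH]. Qed.

Lemma induced_rel_path (A : {set T}) x p : path (induced_rel A) x p -> path D x p.
Proof. by apply: sub_path => a b /and3P[]. Qed.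

Lemma connect_induced_rel_sub (A B : {set T}) y z : A \subset B ->
  connect (induced_rel A) y z -> connect (induced_rel B) y z.
Proof.
move=> /subsetP AB; apply: connect_sub => a b /and3P[dab aA bA].
by apply: connect1; rewrite /induced_rel dab !AB.
Qed.

Lemma dcycle_connect c (A : {set T}) y z : cycle D c -> uniq c -> {subset c <= A} ->
  y \in c -> z \in c -> connect (induced_rel A) y z.
Proof.
move=> cc uc cA yc zc; have [->|yz] := eqVneq y z; first exact: connect0.
have [p1 [p2 [cc' _ ec _]]] := cycle_rot_to cc uc yc zc yz.
have [P1 _] := cycle_cat_path cc'.
apply/connectP; exists (rcons p1 z); last by rewrite last_rcons.
apply: path_induced_rel => //; first exact: cA.
apply/allP => v; rewrite mem_rcons inE => /predU1P[->|vp]; first exact: cA.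
by apply: cA; rewrite -ec inE mem_cat vp orbT.
Qed.

Lemma connect_induced_rel_uniq_path (A : {set T}) x z :
  connect (induced_rel A) x z -> x != z ->
  exists p, [/\ path D x (rcons p z), uniq (x :: rcons p z) & all [in A] (rcons p z)].
Proof.
move=> /connectP [p hp ->] xz.
case: (shortenP hp) xz => p' hp' up' _.
case/lastP: p' hp' up' => [|q v] hp' up' xz; first by rewrite /= eqxx in xz.
rewrite last_rcons; exists q; split => //.
- exact: induced_rel_path hp'.
- exact: induced_rel_path_in hp'.
Qed.

Lemma path_first_hit (P : pred T) x p z : path D x (rcons p z) ->
  uniq (x :: rcons p z) -> P z ->
  exists r q, [/\ path D x (rcons r q), uniq (x :: rcons r q), P q, ~~ has P r
                 & {subset rcons r q <= rcons p z}].
Proof.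
move=> hp up Pz; have hasP_ : has P (rcons p z) by rewrite has_rcons Pz.
case: (split_find hasP_) hp up => q r s Pq nr.
rewrite cat_path -cat_cons cat_uniq => /andP[hr _] /andP[ur _].
by exists r, q; split => // v vr; rewrite mem_cat vr.
Qed.

End InducedConnect.

Lemma path_exit_edge (I : finType) (e : rel I) (U : {set I}) x p :
  path e x p -> x \in U -> last x p \notin U ->
  exists a b, [/\ a \in U, b \notin U & e a b].
Proof.
elim: p x => [|y p IH] x /=; first by move=> _ ->.
case/andP => exy hp xU hl; have [yU|yU] := boolP (y \in U); first exact: IH hp yU hl.
by exists x, y.
Qed.

Section NiceCollection.
Variables (T : finType) (D : rel T) (k : nat) (I : finType) (C : I -> seq T).
Hypothesis nice : nice_collection D k C.

Lemma nice_dcycle i : [/\ cycle D (C i), uniq (C i) & 2 * k - 2 <= size (C i)].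
Proof. by case: nice => /(_ i) [/and3P[_ -> ->] ->]. Qed.

Lemma nice_meet_le1 i j x y : i != j ->
  x \in C i -> x \in C j -> y \in C i -> y \in C j -> x = y.
Proof.
case: nice => _ /(_ i j) le1 ij xi xj yi yj.
have /card_le1P E1 := le1 ij.
have Ax : x \in [pred z | (z \in C i) && (z \in C j)] by rewrite inE xi xj.
by move: (E1 x Ax y); rewrite !inE yi yj => /esym/eqP ->.
Qed.

Lemma nice_cycles_disjoint i j w t1 t2 s1 s2 x y : i != j -> w \in C i -> w \in C j ->
  uniq (w :: t1 ++ x :: t2) -> w :: t1 ++ x :: t2 =i C i -> w :: s1 ++ y :: s2 =i C j ->
  disjoint_seq (t1 ++ x :: t2) (w :: s1 ++ y :: s2).
Proof.
move=> ij wi wj /andP[wt _] ei ej; apply/allP => z zt; rewrite ej.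
have zi : z \in C i by rewrite -ei inE zt orbT.
apply: contra wt => zj; rewrite -(nice_meet_le1 ij zi zj wi wj) in zt *.
by rewrite zt.
Qed.

End NiceCollection.

Section UnionVertices.
Variables (T I : finType) (C : I -> seq T).
Implicit Types U V : {set I}.

Lemma union_verticesP U x :
  reflect (exists2 i, i \in U & x \in C i) (x \in union_vertices C U).
Proof. by rewrite inE; apply: (iffP exists_inP). Qed.

Lemma union_vertices_sub U i : i \in U -> {subset C i <= union_vertices C U}.
Proof. by move=> iU x xi; apply/union_verticesP; exists i. Qed.

Lemma union_verticesU1 U j x :
  (x \in union_vertices C (U :|: [set j])) = (x \in union_vertices C U) || (x \in C j).
Proof.
apply/union_verticesP/orP => [[i]|[/union_verticesP[i iU xi]|xj]].
- rewrite in_setU in_set1 => /orP[iU xi|/eqP -> xj]; last by right.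
  by left; apply/union_verticesP; exists i.
- by exists i; rewrite // in_setU iU.
- by exists j; rewrite // in_setU set11 orbT.
Qed.

Lemma union_vertices1 i x : (x \in union_vertices C [set i]) = (x \in C i).
Proof.
apply/union_verticesP/idP => [[i']|xi]; first by rewrite in_set1 => /eqP->.
by exists i; rewrite ?in_set1.
Qed.

Definition outside_cycle U i x : {set T} :=
  [set v in union_vertices C U | (v \notin C i) || (v == x)].

Lemma mem_outside_cycle U i x v : (v \in outside_cycle U i x) =
  (v \in union_vertices C U) && ((v \notin C i) || (v == x)).
Proof. by rewrite in_set. Qed.

Lemma outside_cycle_avoid U i x s :
  all [in outside_cycle U i x] s -> x \notin s ->
  {in s, forall v, v \in union_vertices C U /\ v \notin C i}.
Proof.
move=> /allP sA xs v vs; move: (sA v vs).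
rewrite mem_outside_cycle => /andP[-> /orP[-> //|/eqP ev]].
by rewrite -ev vs in xs.
Qed.

Lemma outside_cycle_sub U V i x : U \subset V -> outside_cycle U i x \subset outside_cycle V i x.
Proof.
move=> /subsetP UV; apply/subsetP => v.
rewrite !mem_outside_cycle => /andP[/union_verticesP[i' /UV iV vi'] ->].
by rewrite andbT; apply/union_verticesP; exists i'.
Qed.

End UnionVertices.

Section AttachCycle.
Variables (T : finType) (D : rel T) (k : nat) (I : finType) (C : I -> seq T).
Hypothesis k_gt2 : 2 < k.
Hypothesis noB : ~ has_subdiv_B D k 1 1.
Hypothesis nice : nice_collection D k C.

Let k_gt1 : 1 < k := ltnW k_gt2.

(* Strong connectivity of the union alone does not survive attaching a cycle;
   this routing property does, and it still forces a new cycle to meet the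
   union in a single vertex. *)
Definition route (U : {set I}) w z : Prop :=
  exists2 i, i \in U & w \in C i /\ (z \in C i \/ exists2 x, (x \in C i) && (x != w) &
     connect (induced_rel D (outside_cycle C U i x)) x z /\
     connect (induced_rel D (outside_cycle C U i x)) z x).

Definition routable (U : {set I}) : Prop :=
  {in union_vertices C U &, forall w z, w != z -> route U w z}.

Variables (U : {set I}) (j : I) (w : T).
Hypothesis jU : j \notin U.
Hypothesis wj : w \in C j.
Hypothesis wU : w \in union_vertices C U.
Hypothesis routeU : routable U.

Lemma attached_meets_once q : q \in C j -> q \in union_vertices C U -> q = w.
Proof.
move=> qj qU; apply/eqP; apply/negPn/negP => qw; have wq : w != q by rewrite eq_sym.
have [i iU [wi route]] := routeU wU qU wq.
have ij : i != j by apply: contraNneq jU => <-.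
have [cj uj sj] := nice_dcycle nice j; have [ci ui _] := nice_dcycle nice i.
case: route => [qi|[x /andP[xi xw] [x_to_q _]]].
  by move: qw; rewrite (nice_meet_le1 nice ij wi wj qi qj) eqxx.
have xj : x \notin C j by apply: contra xw => xj; rewrite (nice_meet_le1 nice ij xi xj wi wj).
have xq : x != q by apply: contraNneq xj => ->.
have [p [hp up pA]] := connect_induced_rel_uniq_path x_to_q xq.
have [r [q' [hr ur q'j r_off sub]]] := path_first_hit (P := fun v => v \in C j) hp up qj.
have rA : all [in outside_cycle C U i x] (rcons r q').
  by apply/allP => v /sub; apply: (allP pA).
have /(outside_cycle_avoid rA) out : x \notin rcons r q' by case/andP: ur.
have [_ q'i] : q' \in union_vertices C U /\ q' \notin C i.
  by apply: out; rewrite mem_rcons mem_head.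
have wq' : w != q' by apply: contraNneq q'i => <-.
have [s1 [s2 [cj' uj' ej sz]]] := cycle_rot_to cj uj wj q'j wq'.
have [t1 [t2 [ci' ui' ei _]]] := cycle_rot_to ci ui wi xi (contra_neq esym xw).
apply: (bridge_into_cycle_subdiv_B k_gt1 noB cj' uj' _ ci' ui' _ hr).
- by rewrite -sz.
- exact: (nice_cycles_disjoint nice ij wi wj ui' ei ej).
- by move: ur; rewrite /= rcons_uniq => /and3P[].
- by apply/allP => v vr; rewrite ej; apply: (hasPn r_off).
- by apply/allP => v vr; rewrite ei; apply: (out v _).2; rewrite mem_rcons in_cons vr orbT.
Qed.

Lemma no_arc_from_attached a b : a \in C j -> a != w ->
  b \in union_vertices C U -> b != w -> ~~ D a b.
Proof.
move=> aj aw bU bw; apply/negP => ab.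
have bj : b \notin C j by apply: contra bw => bj; rewrite (attached_meets_once bj bU).
have [i iU [wi route]] := routeU wU bU (contra_neq esym bw).
have ij : i != j by apply: contraNneq jU => <-.
have [cj uj sj] := nice_dcycle nice j; have [ci ui _] := nice_dcycle nice i.
have [s1 [s2 [cj' uj' ej sz]]] := cycle_rot_to cj uj wj aj (contra_neq esym aw).
rewrite sz in sj.
have [bi|bi] := boolP (b \in C i).
  have [t1 [t2 [ci' ui' ei _]]] := cycle_rot_to ci ui wi bi (contra_neq esym bw).
  apply: (bridge_from_cycle_subdiv_B k_gt1 noB (r := [::]) cj' uj' sj ci' ui') => //.
  - exact: (nice_cycles_disjoint nice ij wi wj ui' ei ej).
  - by rewrite /= ab.
case: route => [bi'|[x /andP[xi xw] [_ b_to_x]]]; first by rewrite bi' in bi.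
have bx : b != x by apply: contraNneq bi => ->.
have [p [hp up pA]] := connect_induced_rel_uniq_path b_to_x bx.
have [t1 [t2 [ci' ui' ei _]]] := cycle_rot_to ci ui wi xi (contra_neq esym xw).
move: up; rewrite /= mem_rcons inE negb_or rcons_uniq => /and3P[/andP[_ bp] xp up].
have r_out v : v \in b :: p -> v \in union_vertices C U /\ v \notin C i.
  rewrite inE => /predU1P[-> //|]; apply: (outside_cycle_avoid _ xp).
  by move: pA; rewrite all_rcons => /andP[].
apply: (bridge_from_cycle_subdiv_B k_gt1 noB (r := b :: p) cj' uj' sj ci' ui') => //.
- exact: (nice_cycles_disjoint nice ij wi wj ui' ei ej).
- by rewrite rcons_cons /= ab hp.
- by rewrite /= bp.
- apply/allP => z /r_out [zU zi]; rewrite ej.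
  by apply: contra zi => zj; rewrite (attached_meets_once zj zU).
- by apply/allP => z /r_out [_ zi]; rewrite ei.
Qed.

Lemma no_arc_into_attached a b : a \in union_vertices C U -> a != w ->
  b \in C j -> b != w -> ~~ D a b.
Proof.
move=> aU aw bj bw; apply/negP => ab.
have [i iU [wi route]] := routeU wU aU (contra_neq esym aw).
have ij : i != j by apply: contraNneq jU => <-.
have [cj uj sj] := nice_dcycle nice j; have [ci ui _] := nice_dcycle nice i.
have [s1 [s2 [cj' uj' ej sz]]] := cycle_rot_to cj uj wj bj (contra_neq esym bw).
rewrite sz in sj.
have [ai|ai] := boolP (a \in C i).
  have [t1 [t2 [ci' ui' ei _]]] := cycle_rot_to ci ui wi ai (contra_neq esym aw).
  apply: (bridge_into_cycle_subdiv_B k_gt1 noB (r := [::]) cj' uj' sj ci' ui') => //.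
  - exact: (nice_cycles_disjoint nice ij wi wj ui' ei ej).
  - by rewrite /= ab.
case: route => [ai'|[x /andP[xi xw] [x_to_a _]]]; first by rewrite ai' in ai.
have xa : x != a by apply: contraNneq ai => <-.
have [p [hp up pA]] := connect_induced_rel_uniq_path x_to_a xa.
have [t1 [t2 [ci' ui' ei _]]] := cycle_rot_to ci ui wi xi (contra_neq esym xw).
move: up => /andP[xp up].
have r_out := outside_cycle_avoid pA xp.
apply: (bridge_into_cycle_subdiv_B k_gt1 noB (r := rcons p a) cj' uj' sj ci' ui') => //.
- exact: (nice_cycles_disjoint nice ij wi wj ui' ei ej).
- by rewrite rcons_path hp last_rcons ab.
- apply/allP => z /r_out [zU zi]; rewrite ej.
  by apply: contra zi => zj; rewrite (attached_meets_once zj zU).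
- by apply/allP => z /r_out [_ zi]; rewrite ei.
Qed.

Lemma attach_colorable : irreflexive D ->
  induced_colorable D (union_vertices C U) (2 * k - 2) ->
  induced_colorable D (union_vertices C (U :|: [set j])) (2 * k - 2).
Proof.
move=> irrD [f f_ok]; have [cj uj sj] := nice_dcycle nice j.
have [g g_ok] := dcycle_colorable k_gt2 noB irrD cj uj sj.
(* C j meets the union only in w, with no arcs between C j - w and the rest of
   the union, so it suffices to permute the colours of C j to agree at w. *)
pose h v := (tperm (g w) (f w) : {perm 'I_(2 * k - 2)}) (g v).
have hw : h w = f w by rewrite /h tpermL.
have h_ok x y : x \in C j -> y \in C j -> D x y -> h x != h y.
  by move=> xj yj; rewrite /h (inj_eq perm_inj); apply: g_ok; rewrite inE.
exists (fun v => if v \in union_vertices C U then f v else h v) => x y.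
rewrite !union_verticesU1.
case: (boolP (x \in union_vertices C U)) => xU; case: (boolP (y \in union_vertices C U)) => yU //=.
- by move=> _ _; apply: f_ok.
- move=> _ yj; have [->|xw] := eqVneq x w; first by rewrite -hw; apply: h_ok.
  by rewrite (negbTE (no_arc_into_attached xU xw yj _)) //; apply: contraNneq yU => ->.
- move=> xj _; have [->|yw] := eqVneq y w; first by rewrite -hw; apply: h_ok.
  by rewrite (negbTE (no_arc_from_attached xj _ yU yw)) //; apply: contraNneq xU => ->.
- exact: h_ok.
Qed.

Hypothesis strongU : strongly_connected_in D (union_vertices C U).

Lemma attach_strongly_connected :
  strongly_connected_in D (union_vertices C (U :|: [set j])).
Proof.
have [cj uj _] := nice_dcycle nice j.
set X' := union_vertices C (U :|: [set j]).
have sub_jX' : {subset C j <= X'} by move=> v vj; rewrite union_verticesU1 vj orbT.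
have sub_UX' : union_vertices C U \subset X'.
  by apply/subsetP => v vU; rewrite union_verticesU1 vU.
have conn_j y z : y \in C j -> z \in C j -> connect (induced_rel D X') y z.
  by move=> yj zj; apply: dcycle_connect cj uj sub_jX' yj zj.
have conn_U y z : y \in union_vertices C U -> z \in union_vertices C U ->
    connect (induced_rel D X') y z.
  by move=> yU zU; apply: connect_induced_rel_sub sub_UX' _; apply: strongU.
move=> y z; rewrite !union_verticesU1 => /orP[yU|yj] /orP[zU|zj].
- exact: conn_U.
- exact: connect_trans (conn_U _ _ yU wU) (conn_j _ _ wj zj).
- exact: connect_trans (conn_j _ _ yj wj) (conn_U _ _ wU zU).
- exact: conn_j.
Qed.

Let V := U :|: [set j].

Lemma route_attach_old w' z : route U w' z -> route V w' z.
Proof.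
have out_sub i x := @outside_cycle_sub _ _ C U V i x (subsetUl U [set j]).
case=> i iU [w'i route']; exists i; first by rewrite in_setU iU.
split=> //; case: route' => [zi|[x xi [x_to_z z_to_x]]]; [by left | right].
by exists x => //; split; apply: connect_induced_rel_sub (out_sub i x) _.
Qed.

Lemma route_into_attached w' z : w' \in union_vertices C U -> w' != w ->
  z \in C j -> route V w' z.
Proof.
move=> w'U w'w zj; have [cj uj _] := nice_dcycle nice j.
have [i iU [w'i route']] := routeU w'U wU w'w.
have ij : i != j by apply: contraNneq jU => <-.
have out_sub x := @outside_cycle_sub _ _ C U V i x (subsetUl U [set j]).
have j_out x : x = w \/ w \notin C i -> {subset C j <= outside_cycle C V i x}.
  move=> xw v vj; rewrite mem_outside_cycle union_verticesU1 vj orbT /=.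
  case: (boolP (v \in C i)) => vi //=.
  have vw := attached_meets_once vj (union_vertices_sub iU vi).
  by case: xw => [->|wi]; [rewrite vw | rewrite -vw vi in wi].
exists i; first by rewrite in_setU iU.
split=> //; right; case: (boolP (w \in C i)) => wi.
  exists w; first by rewrite wi eq_sym.
  by split; apply: dcycle_connect cj uj (j_out w (or_introl erefl)) _ _.
case: route' => [wi'|[x /andP[xi xw'] [x_to_w w_to_x]]]; first by rewrite wi' in wi.
exists x; first by rewrite xi xw'.
have out := j_out x (or_intror wi).
split.
- apply: connect_trans (connect_induced_rel_sub (out_sub x) x_to_w) _.
  exact: dcycle_connect cj uj out wj zj.
- apply: connect_trans _ (connect_induced_rel_sub (out_sub x) w_to_x).
  exact: dcycle_connect cj uj out zj wj.
Qed.

Lemma route_from_attached w' z : w' \in C j -> w' \notin union_vertices C U ->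
  z \in union_vertices C V -> route V w' z.
Proof.
move=> w'j w'U zV; exists j; first by rewrite in_setU set11 orbT.
split=> //; case: (boolP (z \in C j)) => zj; [by left | right].
have zU : z \in union_vertices C U by move: zV; rewrite union_verticesU1 (negbTE zj) orbF.
exists w; first by rewrite wj; apply: contraNneq w'U => <-.
have U_out : union_vertices C U \subset outside_cycle C V j w.
  apply/subsetP => v vU; rewrite mem_outside_cycle union_verticesU1 vU /=.
  by case: (boolP (v \in C j)) => vj //=; rewrite (attached_meets_once vj vU).
by split; apply: connect_induced_rel_sub U_out _; apply: strongU.
Qed.

Lemma attach_routable : routable (U :|: [set j]).
Proof.
move=> w' z; rewrite !union_verticesU1 => w'V zV w'z.
case: (boolP (w' \in union_vertices C U)) => w'U; last first.
  by apply: route_from_attached; rewrite ?union_verticesU1 //; move: w'V; rewrite (negbTE w'U).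
case: (boolP (z \in union_vertices C U)) => zU; first exact/route_attach_old/routeU.
have zj : z \in C j by move: zV; rewrite (negbTE zU).
have [ew|w'w] := eqVneq w' w; last exact: route_into_attached.
by exists j; rewrite ?in_setU ?set11 ?orbT // ew; split=> //; left.
Qed.

End AttachCycle.

Section Component.
Variables (T : finType) (D : rel T) (k : nat) (I : finType) (C : I -> seq T).
Hypothesis k_gt2 : 2 < k.
Hypothesis noB : ~ has_subdiv_B D k 1 1.
Hypothesis irrD : irreflexive D.
Hypothesis nice : nice_collection D k C.

Definition growth_invariant (U : {set I}) : Prop :=
  [/\ induced_colorable D (union_vertices C U) (2 * k - 2),
      strongly_connected_in D (union_vertices C U) & routable D C U].

Lemma growth_invariant1 i : growth_invariant [set i].
Proof.
have [ci ui si] := nice_dcycle nice i.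
have E : union_vertices C [set i] = [set x in C i].
  by apply/setP => x; rewrite union_vertices1 inE.
rewrite /growth_invariant /routable E; split.
- exact: dcycle_colorable.
- by move=> y z; rewrite !inE => yi zi; apply: dcycle_connect ci ui _ yi zi => v; rewrite inE.
- move=> w z; rewrite !inE => wi zi _.
  by exists i; rewrite ?set11 //; split=> //; left.
Qed.

Lemma growth_invariant_attach (U : {set I}) j w : j \notin U -> w \in C j ->
  w \in union_vertices C U -> growth_invariant U -> growth_invariant (U :|: [set j]).
Proof.
move=> jU wj wU [colU strongU routeU]; split.
- exact: (attach_colorable k_gt2 noB nice jU wj wU routeU irrD colU).
- exact: (attach_strongly_connected nice wj wU strongU).
- exact: (attach_routable k_gt2 noB nice jU wj wU routeU strongU).
Qed.

Lemma growth_invariant_component S i0 :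
  S = [set j | connect (share_vertex C) i0 j] -> growth_invariant S.
Proof.
move=> defS; have i0S : i0 \in S by rewrite defS inE connect0.
suff grow (U : {set I}) : U \subset S -> i0 \in U -> growth_invariant U -> growth_invariant S.
  by apply: (grow [set i0]); rewrite ?sub1set ?set11 //; apply: growth_invariant1.
have [n] := ubnP #|S :\: U|; elim: n U => // n IH U ltn US i0U invU.
have [eUS|neUS] := eqVneq U S; first by rewrite -eUS.
have [j1 j1S j1U] : exists2 j1, j1 \in S & j1 \notin U.
  apply/exists_inP; apply: contraR neUS => H; rewrite eqEsubset US /=.
  by apply/subsetP => x xS; apply: contraR H => xU; apply/exists_inP; exists x.
have /connectP[p hp el] : connect (share_vertex C) i0 j1 by move: j1S; rewrite defS inE.
have [a [b [aU bU ab]]] : exists a b, [/\ a \in U, b \notin U & share_vertex C a b].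
  by apply: path_exit_edge hp i0U _; rewrite -el.
have bS : b \in S.
  rewrite defS inE; apply: connect_trans (connect1 ab).
  by move/subsetP: US => /(_ a aU); rewrite defS inE.
case/hasP: ab => w wa wb.
apply: (IH (U :|: [set b])).
- have -> : S :\: (U :|: [set b]) = (S :\: U) :\ b.
    by apply/setP => x; rewrite !inE negb_or andbCA andbA.
  by move: ltn; rewrite (cardsD1 b (S :\: U)) !inE bU bS.
- by rewrite subUset US sub1set.
- by rewrite in_setU i0U.
- exact: growth_invariant_attach wb (union_vertices_sub aU wa) invU.
Qed.

End Component.

Theorem mainTheorem10 (k : nat) (T : finType) (D : rel T) (I : finType)
  (C : I -> seq T) (S : {set I}) :
  3 <= k ->
  irreflexive D ->
  ~ has_subdiv_B D k 1 1 ->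
  nice_collection D k C ->
  is_component C S ->
  induced_colorable D (union_vertices C S) (2 * k - 2).
Proof.
move=> k_gt2 irrD noB nice [i0 defS].
by case: (growth_invariant_component k_gt2 noB irrD nice defS).
Qed.
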